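(* Let $P\subseteq S_n$ be a permutation array with ${\rm hd}(P)\ge 4$. Then ${\rm hd}(P^{\sf CT})\le{\rm hd}(P)$.
   Context: $S_n$ is the symmetric group on $\{0,1,\ldots,n-1\}$. A permutation array is a non-empty subset $P\subseteq S_n$; ${\rm hd}(\sigma,\tau)=|\{x:\sigma(x)\neq\tau(x)\}|$ and ${\rm hd}(P)=\min\{{\rm hd}(\sigma,\tau):\sigma,\tau\in P,\ \sigma\neq\tau\}$. The contraction of $\sigma\in S_n$ is $\sigma^{\sf CT}\in S_{n-1}$ (on $\{0,\ldots,n-2\}$) defined by $\sigma^{\sf CT}(x)=\sigma(n-1)$ if $x=\sigma^{-1}(n-1)$ and $\sigma^{\sf CT}(x)=\sigma(x)$ otherwise (i.e. delete $n-1$ from the cycle notation of $\sigma$); $P^{\sf CT}=\{\sigma^{\sf CT}:\sigma\in P\}$. *)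

From mathcomp Require Import all_boot all_fingroup.
Set Implicit Arguments. Unset Strict Implicit. Unset Printing Implicit Defensive.

Definition hd (n : nat) (s t : {perm 'I_n}) : nat := #|[set x | s x != t x]|.

(* Minimum distance of a permutation array: minimum of hd over pairs of
   distinct elements (the default value n is only used when P has < 2
   elements, where the paper's hd(P) is undefined; the statement assumes
   #|P| >= 2). *)
Definition hdP (n : nat) (P : {set {perm 'I_n}}) : nat :=
  \big[minn/n]_(st in setX P P | st.1 != st.2) hd st.1 st.2.

(* Contraction: S_{m+1} -> S_m (points 0..m-1 are embedded via lift ord_max,
   i.e. with the same value; the point m = ord_max is deleted from the cycle
   notation). *)
Definition ct_fun (m : nat) (s : {perm 'I_m.+1}) (x : 'I_m) : 'I_m :=
  match unlift ord_max (s (lift ord_max x)) with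
  | Some z => z
  | None => match unlift ord_max (s ord_max) with
            | Some z => z
            | None => x
            end
  end.

Lemma ct_fun_inj (m : nat) (s : {perm 'I_m.+1}) : injective (ct_fun s).
Proof.
have nl : forall z : 'I_m, lift ord_max z != ord_max by move=> z; rewrite eq_sym neq_lift.
move=> x y; rewrite /ct_fun.
case: (unliftP ord_max (s (lift ord_max x))) => [a Ha|Hx];
case: (unliftP ord_max (s (lift ord_max y))) => [b Hb|Hy].
- by move=> eab; subst b; apply: (@lift_inj _ ord_max); apply: (@perm_inj _ s); rewrite Ha Hb.
- case: (unliftP ord_max (s ord_max)) => [c Hc|Hc] eac.
    subst c; case/eqP: (nl x); apply: (@perm_inj _ s); by rewrite Ha Hc.
  by case/eqP: (nl y); apply: (@perm_inj _ s); rewrite Hy Hc.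
- case: (unliftP ord_max (s ord_max)) => [c Hc|Hc] ecb.
    subst c; case/eqP: (nl y); apply: (@perm_inj _ s); by rewrite Hb Hc.
  by case/eqP: (nl x); apply: (@perm_inj _ s); rewrite Hx Hc.
- by move=> _; apply: (@lift_inj _ ord_max); apply: (@perm_inj _ s); rewrite Hx Hy.
Qed.

Definition contraction (m : nat) (s : {perm 'I_m.+1}) : {perm 'I_m} :=
  perm (@ct_fun_inj m s).

Definition contractionP (m : nat) (P : {set {perm 'I_m.+1}}) : {set {perm 'I_m}} :=
  [set contraction s | s in P].

(* Contraction changes s only at s^-1(n-1), which is redirected to s(n-1).
   So a point where s^CT and t^CT differ is either a point where s and t
   differ, or the unique point that both send to n-1, in which case s and t
   differ at n-1: hence hd(s^CT, t^CT) <= hd(s, t).  Conversely, if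
   s^CT = t^CT then s and t agree outside {n-1, s^-1(n-1), t^-1(n-1)}, so
   contraction is injective on an array of minimum distance at least 4, and
   every distance of P^CT is dominated by a distance of P. *)
From mathcomp Require Import all_boot all_fingroup order.
Set Implicit Arguments. Unset Strict Implicit. Unset Printing Implicit Defensive.
Import Order.TTheory.

Section Contraction.
Variable m : nat.
Implicit Types s t : {perm 'I_m.+1}.

Lemma lift_max_eqF (x : 'I_m) : (lift ord_max x == ord_max :> 'I_m.+1) = false.
Proof. by apply/negbTE; rewrite eq_sym neq_lift. Qed.

Lemma lift_contraction s x :
  lift ord_max (contraction s x) =
  if s (lift ord_max x) == ord_max then s ord_max else s (lift ord_max x).
Proof.
rewrite permE /ct_fun; case: unliftP => [z -> | sx_max]; first by rewrite lift_max_eqF.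
rewrite sx_max eqxx; case: unliftP => [z -> // | smax_max].
by move/eqP: (perm_inj (etrans sx_max (esym smax_max))); rewrite lift_max_eqF.
Qed.

Lemma hd_contraction s t : hd (contraction s) (contraction t) <= hd s t.
Proof.
pose wit x : 'I_m.+1 :=
  if s (lift ord_max x) == t (lift ord_max x) then ord_max else lift ord_max x.
have sx_max x : contraction s x != contraction t x ->
    s (lift ord_max x) = t (lift ord_max x) -> s (lift ord_max x) = ord_max.
  rewrite -(inj_eq (@lift_inj _ ord_max)) !lift_contraction => + st_x; rewrite st_x.
  by case: (t (lift ord_max x) =P ord_max) => // _; rewrite eqxx.
have wit_inj : {in [set x | contraction s x != contraction t x] &, injective wit}.
  move=> x y; rewrite !inE /wit => dx dy.
  case: eqP => [st_x | _]; case: eqP => [st_y | _] //.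
  - move=> _; apply/(@lift_inj _ ord_max)/(@perm_inj _ s).
    by rewrite (sx_max x dx st_x) (sx_max y dy st_y).
  - by move/eqP; rewrite eq_sym lift_max_eqF.
  - by move/eqP; rewrite lift_max_eqF.
  - exact: lift_inj.
rewrite /hd -(card_in_imset wit_inj); apply/subset_leq_card/subsetP => _ /imsetP[x dx ->].
rewrite inE in dx; rewrite inE /wit; case: ifP => [/eqP st_x | /negbT //].
have s_max := sx_max x dx st_x; move: dx.
by rewrite -(inj_eq (@lift_inj _ ord_max)) !lift_contraction -st_x s_max eqxx.
Qed.

Lemma hd_le3_of_contraction_eq s t : contraction s = contraction t -> hd s t <= 3.
Proof.
move=> st_ct; rewrite /hd.
apply: leq_trans (card_size [:: ord_max; s^-1 ord_max; t^-1 ord_max]%g).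
apply/subset_leq_card/subsetP => y; rewrite !inE -!(canF_eq (permK _)).
case: (unliftP ord_max y) => [x -> | -> _]; last by rewrite eqxx.
have := lift_contraction s x; rewrite st_ct lift_contraction.
case: eqP => [-> _ _ | _]; first by rewrite !orbT.
case: eqP => [-> _ _ | _ -> ]; first by rewrite orbT.
by rewrite eqxx.
Qed.

End Contraction.

Lemma hdP_geP n (P : {set {perm 'I_n}}) d :
  reflect (d <= n /\ forall s t, s \in P -> t \in P -> s != t -> d <= hd s t)
          (d <= hdP P).
Proof.
rewrite /hdP -minEnat.
apply: (iffP (@bigmin_geP _ nat _ n d _ (fun st => hd st.1 st.2)))
  => -[d_n d_hd]; split=> //.
  by move=> s t sP tP st; apply: (d_hd (s, t)); rewrite !inE sP tP.
by case=> s t; rewrite !inE /= => /andP[/andP[sP tP] st]; apply: d_hd.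
Qed.

Lemma hdP_le_hd n (P : {set {perm 'I_n}}) s t :
  s \in P -> t \in P -> s != t -> hdP P <= hd s t.
Proof.
move=> sP tP st; rewrite /hdP -minEnat.
by apply: (@bigmin_le_cond _ nat _ n (s, t)); rewrite !inE sP tP.
Qed.

Lemma hdP_le n (P : {set {perm 'I_n}}) : hdP P <= n.
Proof. by have /hdP_geP[] := leqnn (hdP P). Qed.

Theorem corollary3p4 (m : nat) (P : {set {perm 'I_m.+1}}) :
  1 < #|P| -> 4 <= hdP P -> hdP (contractionP P) <= hdP P.
Proof.
move=> _ /hdP_geP[_ hd_ge4]; apply/hdP_geP.
split=> [|s t sP tP st]; first exact/leqW/hdP_le.
have ct_st : contraction s != contraction t.
  by apply: contraTneq (hd_ge4 s t sP tP st) => /hd_le3_of_contraction_eq; rewrite leqNgt.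
apply: leq_trans (hd_contraction s t).
by apply: hdP_le_hd; rewrite // /contractionP imset_f.
Qed.
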